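(* Let $n\ge1$, let $b_1,\dots,b_n$ be integers with $1\le b_1\le b_2\le\cdots\le b_n$, let $s=\sum_{i=1}^n b_i$, and let $f:\mathbb R^n\to\mathbb R$, $f(\bm\theta)=\prod_{i=1}^n\theta_i^{b_i}$. Let $N$ be the minimum atom count of a DC decomposition of $f$ (defined in the context). Then: (a) if $s$ is even and the atoms are of the form $(u^\top\bm\theta)^s$, then $\prod_{i=2}^n(b_i+1)\le N\le\left\lfloor\tfrac12\prod_{i=1}^n(b_i+1)\right\rfloor$; (b) if $s$ is odd and the atoms are of the form $(u^\top\bm\theta+\kappa)^{s+1}$, then $N=\prod_{i=1}^n(b_i+1)$.
   Context: A DC decomposition of $f$ with atoms is an identity, valid for all $\bm\theta\in\mathbb R^n$, $f(\bm\theta)=g(\bm\theta)-h(\bm\theta)$ with $g(\bm\theta)=\sum_{i=1}^r\alpha_i\phi_i(\bm\theta)$ and $h(\bm\theta)=\sum_{i=r+1}^{r+q}\alpha_i\phi_i(\bm\theta)$, where every $\alpha_i>0$ and each $\phi_i$ is a convex atom: $\phi_i(\bm\theta)=(u_i^\top\bm\theta)^s$ with $u_i\in\mathbb R^n$ when $s$ is even, and $\phi_i(\bm\theta)=(u_i^\top\bm\theta+\kappa_i)^{s+1}$ with $u_i\in\mathbb R^n$, $\kappa_i\in\mathbb R$ when $s$ is odd. The minimum atom count $N$ is the minimum of $r+q$ over all such decompositions. *)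

From mathcomp Require Import all_boot all_order all_algebra.
From mathcomp Require Import reals.
Set Implicit Arguments. Unset Strict Implicit. Unset Printing Implicit Defensive.
Import Order.TTheory GRing.Theory Num.Theory.
Local Open Scope ring_scope.

Definition dotp (R : realType) (n : nat) (u th : 'I_n -> R) : R :=
  \sum_(j < n) u j * th j.

Definition atom (R : realType) (n s : nat) (u : 'I_n -> R) (kappa : R)
    (th : 'I_n -> R) : R :=
  if ~~ odd s then (dotp u th) ^+ s else (dotp u th + kappa) ^+ s.+1.

Definition DC_atoms (R : realType) (n s : nat) (f : ('I_n -> R) -> R)
    (N : nat) : Prop :=
  exists (r q : nat)
    (a : 'I_r -> R) (ug : 'I_r -> 'I_n -> R) (kg : 'I_r -> R)
    (c : 'I_q -> R) (uh : 'I_q -> 'I_n -> R) (kh : 'I_q -> R),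
    [/\ (r + q)%N = N,
        (forall i, 0 < a i),
        (forall i, 0 < c i) &
        forall th : 'I_n -> R,
          f th = \sum_(i < r) a i * atom s (ug i) (kg i) th
               - \sum_(i < q) c i * atom s (uh i) (kh i) th].

Definition min_atom_count (R : realType) (n s : nat) (f : ('I_n -> R) -> R)
    (N : nat) : Prop :=
  DC_atoms s f N /\ forall k, DC_atoms s f k -> (N <= k)%N.

(* For even s, the monomial th^b is a combination of s-th powers of the linear forms
   sum_j (2 l_j - b_j) th_j, l ranging over the box prod_j {0, ..., b_j}: in each
   coordinate, Vandermonde-dual weights on the nodes 2 l - b_j kill every monomial of the
   multinomial expansion except th^b.  Antipodal points of the box give the same even
   power, so half of the box suffices.  For odd s, the same construction applied to the
   monomial homogenized by an extra variable of exponent 1, which is then set to 1,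
   yields prod_i (b_i + 1) atoms (u^T th + kappa)^(s+1).

   Conversely, an identity sum_k lam_k (p_k^T x)^D = x^beta determines all the moments
   sum_k lam_k p_k^g with |g| = D: they vanish except at g = beta.  With fewer atoms
   than exponent vectors e <= (beta_1, ..., beta_m), the catalecticant columns
   (p_k^(S - |e|, e))_e satisfy a linear relation c; shifting the exponents so that a
   maximal-degree e0 of the support of c lands on beta turns the relation into a
   combination of moments equal to c(e0) times the beta-moment, a contradiction.  The
   shift needs beta_0 >= 1, provided by b_1 for even s and by the extra variable for
   odd s. *)

From mathcomp Require Import all_boot all_order all_algebra.
From mathcomp Require Import reals.
From mathcomp Require Import ring zify.
From Stdlib Require Import Classical Wf_nat.
Import Order.TTheory GRing.Theory Num.Theory.
Local Open Scope ring_scope.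
Set Implicit Arguments. Unset Strict Implicit. Unset Printing Implicit Defensive.

(** * Multinomial expansion and grid power sums *)

Definition ord_cons (T : Type) n (x : T) (a : 'I_n -> T) (i : 'I_n.+1) : T :=
  if unlift ord0 i is Some j then a j else x.

Lemma ord_cons0 (T : Type) n (x : T) (a : 'I_n -> T) : ord_cons x a ord0 = x.
Proof. by rewrite /ord_cons unlift_none. Qed.

Lemma ord_cons_lift (T : Type) n (x : T) (a : 'I_n -> T) i :
  ord_cons x a (lift ord0 i) = a i.
Proof. by rewrite /ord_cons liftK. Qed.

Lemma leq_sum_ord n (F : 'I_n -> nat) i : (F i <= \sum_j F j)%N.
Proof. by rewrite (bigD1 i) //= leq_addr. Qed.

Lemma exists_ltn_of_sum_eq n (a g : 'I_n -> nat) :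
  (\sum_j a j = \sum_j g j)%N -> ~~ [forall j, a j == g j] -> exists j, (a j < g j)%N.
Proof.
move=> sum_eq a_neq; apply/existsP; apply: contraR a_neq => /existsPn a_ge.
have g_le j : (g j <= a j)%N by rewrite leqNgt a_ge.
have : (\sum_j (a j - g j) == 0)%N by rewrite sumnB // sum_eq subnn.
rewrite sum_nat_eq0 => /forallP a_le; apply/forallP => j.
by rewrite eqn_leq g_le andbT -subn_eq0 (implyP (a_le j)).
Qed.

Lemma card_nth (T : Type) (x0 : T) (s : seq T) n (P : pred T) : size s = n ->
  #|[pred t : 'I_n | P (nth x0 s t)]| = count P s.
Proof.
move=> <-; rewrite -sum1_card -sum1_count -[in RHS](mkseq_nth x0 s) /mkseq big_map.
by rewrite -(subn0 (size s)) -/(index_iota 0 (size s)) big_mkord subn0; apply: eq_bigl.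
Qed.

Lemma card_ord_ltn n k : (k <= n)%N -> #|[pred l : 'I_n | (l < k)%N]| = k.
Proof.
move=> kn; rewrite -sum1_card (big_ord_narrow_cond (P := xpredT) (F := fun _ => 1%N) kn).
by rewrite sum1_card card_ord.
Qed.

Section Words.
Variables M D : nat.
Implicit Type w : {ffun 'I_D -> 'I_M}.

Definition occ w (j : 'I_M) : nat := #|[pred t | w t == j]|.

Definition words (g : 'I_M -> nat) : nat :=
  #|[pred w : {ffun 'I_D -> 'I_M} | [forall j, occ w j == g j]]|.

Lemma sum_occ w : (\sum_j occ w j)%N = D.
Proof.
rewrite -[RHS]card_ord -sum1_card (partition_big w predT) //=.
by apply: eq_bigr => j _; rewrite sum1_card.
Qed.

Lemma prod_occ (R : comPzRingType) w (y : 'I_M -> R) :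
  \prod_t y (w t) = \prod_j y j ^+ occ w j.
Proof.
rewrite (partition_big w predT) //=; apply: eq_bigr => j _.
by rewrite -prodr_const; apply: eq_big => [t|t /eqP ->].
Qed.

Lemma expr_sum_words (R : comPzRingType) (a x : 'I_M -> R) :
  (\sum_j a j * x j) ^+ D =
  \sum_w (\prod_j a j ^+ occ w j) * \prod_j x j ^+ occ w j.
Proof.
rewrite -[in LHS](card_ord D) -prodr_const bigA_distr_bigA.
by apply: eq_bigr => w _; rewrite big_split /= !prod_occ.
Qed.

End Words.

Lemma words_gt0 M D (g : 'I_M -> nat) : (\sum_j g j)%N = D -> (0 < words D g)%N.
Proof.
case: M g => [|M'] g sum_g.
  rewrite big_ord0 in sum_g; rewrite -sum_g.
  by apply/card_gt0P; exists [ffun t => t]; rewrite inE; apply/forallP => -[].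
pose s := flatten [seq nseq (g j) j | j <- enum 'I_M'.+1].
have size_s : size s = D.
  rewrite -sum_g size_flatten /shape -map_comp sumnE big_map big_enum /=.
  by apply: eq_bigr => j _; rewrite /= size_nseq.
apply/card_gt0P; exists [ffun t : 'I_D => nth ord0 s t].
rewrite inE; apply/forallP => j.
rewrite /occ (eq_card (B := [pred t : 'I_D | pred1 j (nth ord0 s t)])); last first.
  by move=> t; rewrite !inE ffunE.
rewrite card_nth // count_flatten -map_comp sumnE big_map big_enum /=.
rewrite (bigD1 j) //= count_nseq /= eqxx mul1n big1 ?addn0 //.
by move=> i /negbTE ij; rewrite count_nseq /= ij.
Qed.

Lemma vandermonde_dual (R : fieldType) K (t : 'I_K -> R) (c : 'I_K) :
  injective t -> {v : 'I_K -> R | forall e : 'I_K, \sum_l v l * t l ^+ e = (e == c)%:R}.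
Proof.
move=> t_inj; pose V := Vandermonde K (\row_l t l).
have V_unit : V \in unitmx.
  rewrite unitmxE det_Vandermonde unitfE; apply/prodf_neq0 => i _.
  apply/prodf_neq0 => j ij; rewrite !mxE subr_eq0; apply: contraTneq ij => /t_inj ->.
  by rewrite ltnn.
pose w := invmx V *m delta_mx c (ord0 : 'I_1).
exists (fun l => w l ord0) => e.
have := congr1 (fun B : 'M[R]_(K, 1) => B e ord0) (mulKVmx V_unit (delta_mx c ord0)).
by rewrite !mxE /= andbT => <-; apply: eq_bigr => l _; rewrite !mxE mulrC.
Qed.

Lemma dual_weights (R : fieldType) L d (t : 'I_L -> R) (c : nat) :
  (d < L)%N -> (c <= d)%N -> {in [pred l : 'I_L | (l <= d)%N] &, injective t} ->
  {v : 'I_L -> R | forall l : 'I_L, (d < l)%N -> v l = 0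
                 & forall e, (e <= d)%N -> \sum_l v l * t l ^+ e = (e == c)%:R}.
Proof.
move=> dL cd t_inj; pose w := widen_ord dL.
have w_in l : w l \in [pred l : 'I_L | (l <= d)%N] by exact: ltn_ord l.
have tw_inj : injective (t \o w).
  by move=> l1 l2 /(t_inj _ _ (w_in l1) (w_in l2)) [] /val_inj.
have [v vP] := vandermonde_dual (Ordinal (cd : (c < d.+1)%N)) tw_inj.
exists (fun l : 'I_L => if (l <= d)%N then v (inord l) else 0) => [l|e ed].
  by move/ltn_geF => ->.
have := vP (inord e); rewrite -(inj_eq val_inj) /= inordK // => <-.
transitivity (\sum_(l < L | true && (l < d.+1)%N) v (inord l) * t l ^+ e).
  by rewrite [RHS]big_mkcond; apply: eq_bigr => l _; rewrite ltnS; case: ifP; rewrite ?mul0r.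
rewrite (big_ord_narrow_cond dL); apply: eq_bigr => l _.
by congr (v _ * _); apply: val_inj; rewrite /= inordK.
Qed.

Section GridPowerSums.
Variables (R : comPzRingType) (M L : nat) (v t : 'I_M -> 'I_L -> R).
Implicit Type X : {ffun 'I_M -> 'I_L}.

Definition grid_weight X : R := \prod_j v j (X j).

Lemma grid_sum_monomial (a : 'I_M -> nat) :
  \sum_X grid_weight X * \prod_j t j (X j) ^+ a j = \prod_j \sum_l v j l * t j l ^+ a j.
Proof. by rewrite bigA_distr_bigA; apply: eq_bigr => X _; rewrite -big_split. Qed.

Lemma grid_power_sum D (x : 'I_M -> R) :
  \sum_X grid_weight X * (\sum_j t j (X j) * x j) ^+ D =
  \sum_(w : {ffun 'I_D -> 'I_M})
     (\prod_j \sum_l v j l * t j l ^+ occ w j) * \prod_j x j ^+ occ w j.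
Proof.
under eq_bigr do rewrite expr_sum_words big_distrr /=.
rewrite exchange_big /=; apply: eq_bigr => w _.
by rewrite -grid_sum_monomial big_distrl /=; apply: eq_bigr => X _; rewrite mulrA.
Qed.

Lemma grid_power_sum_monomial D (g : 'I_M -> nat) :
  (\sum_j g j)%N = D ->
  (forall j e, (e <= g j)%N -> \sum_l v j l * t j l ^+ e = (e == g j)%:R) ->
  forall x, \sum_X grid_weight X * (\sum_j t j (X j) * x j) ^+ D =
            (words D g)%:R * \prod_j x j ^+ g j.
Proof.
move=> sum_g vt x; rewrite grid_power_sum /words -sum1_card natr_sum big_distrl /=.
rewrite [RHS]big_mkcond /=; apply: eq_bigr => w _; rewrite inE.
have [/forallP occ_g | occ_ng] := boolP [forall j, occ w j == g j].
  rewrite mul1r big1 ?mul1r => [|j _]; last by rewrite (eqP (occ_g j)) vt // eqxx.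
  by apply: eq_bigr => j _; rewrite (eqP (occ_g j)).
have [j lt_j] := exists_ltn_of_sum_eq (etrans (sum_occ w) (esym sum_g)) occ_ng.
by rewrite (bigD1 j) //= vt ?(ltnW lt_j) // ltn_eqF // !mul0r.
Qed.

End GridPowerSums.

(** * Lower bound: moments and catalecticant *)

(* Average the identity over the grid of points (l_j + 1)_j, with weights dual to the
   powers of the nodes 1, ..., D + 1: this extracts the coefficient of x^g.  The nodes
   avoid 0 because the identity is only assumed off the coordinate hyperplanes. *)
Lemma moments_of_power_identity (R : numFieldType) M K (lam : 'I_K -> R)
    (p : 'I_K -> 'I_M -> R) (beta : 'I_M -> nat) :
  (forall x : 'I_M -> R, (forall j, x j != 0) ->
     \sum_k lam k * (\sum_j p k j * x j) ^+ (\sum_j beta j) = \prod_j x j ^+ beta j) ->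
  forall g : 'I_M -> nat, (\sum_j g j = \sum_j beta j)%N ->
  (words (\sum_j beta j) g)%:R * (\sum_k lam k * \prod_j p k j ^+ g j) =
  \prod_j (beta j == g j)%:R.
Proof.
set D := (\sum_j beta j)%N => power_id g sum_g.
have g_le j : (g j <= D)%N by rewrite -sum_g leq_sum_ord.
pose t (j : 'I_M) (l : 'I_D.+1) : R := l.+1%:R.
have t_inj j : {in [pred l : 'I_D.+1 | (l <= D)%N] &, injective (t j)}.
  by move=> l1 l2 _ _ /eqP; rewrite eqr_nat eqSS => /eqP /val_inj.
pose wP j := dual_weights (ltnSn D) (g_le j) (t_inj j).
pose v j := s2val (wP j).
have vt j e : (e <= D)%N -> \sum_l v j l * t j l ^+ e = (e == g j)%:R.
  exact: (s2valP' (wP j)).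
have vt_g j e : (e <= g j)%N -> \sum_l v j l * t j l ^+ e = (e == g j)%:R.
  by move=> le_e; rewrite vt // (leq_trans le_e).
transitivity (\sum_X grid_weight v X * \prod_j t j (X j) ^+ beta j); last first.
  by rewrite grid_sum_monomial; apply: eq_bigr => j _; rewrite vt ?leq_sum_ord.
rewrite mulr_sumr.
under eq_bigr do rewrite mulrCA -(grid_power_sum_monomial sum_g vt_g) mulr_sumr.
rewrite exchange_big /=; apply: eq_bigr => X _.
rewrite -power_id => [|j]; last by rewrite pnatr_eq0.
rewrite mulr_sumr; apply: eq_bigr => k _; rewrite mulrCA.
by congr (_ * (_ * _ ^+ _)); apply: eq_bigr => j _; rewrite mulrC.
Qed.

Lemma exists_linear_relation (R : fieldType) (I : finType) K (F : I -> 'I_K -> R) :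
  (K < #|I|)%N ->
  exists2 c : I -> R, (exists i, c i != 0) & forall k, \sum_i c i * F i k = 0.
Proof.
move=> K_lt; pose A : 'M[R]_(#|I|, K) := \matrix_(r, k) F (enum_val r) k.
have [Z ZA /matrix0Pn [r0 [r1 Z_r1]]] : exists2 Z : 'M_#|I|, Z *m A = 0 & Z != 0.
  exists (kermx A); first exact: mulmx_ker.
  rewrite kermx_eq0 /row_free; apply: contraTneq (rank_leq_col A) => ->.
  by rewrite -ltnNge.
exists (fun i => Z r0 (enum_rank i)); first by exists (enum_val r1); rewrite enum_valK.
move=> k; have := congr1 (fun B : 'M_(#|I|, K) => B r0 k) ZA.
rewrite !mxE; apply: etrans; rewrite (reindex (fun r : 'I_#|I| => enum_val r)) /=.
  by apply: eq_bigr => r _; rewrite enum_valK mxE.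
by apply: onW_bij; exact: enum_val_bij.
Qed.

Section PowerSumLowerBound.
Variables (R : fieldType) (m K : nat) (lam : 'I_K -> R) (p : 'I_K -> 'I_m.+1 -> R)
  (beta : 'I_m.+1 -> nat).

Let tail i := beta (lift ord0 i).
Let S := (\sum_i tail i)%N.
Let exponents := {dffun forall i : 'I_m, 'I_(tail i).+1}.
Let deg (e : exponents) := (\sum_i e i)%N.
Let mono k (g : 'I_m.+1 -> nat) := \prod_j p k j ^+ g j.
Let catalecticant (e : exponents) k :=
  p k ord0 ^+ (S - deg e) * \prod_i p k (lift ord0 i) ^+ e i.
(* The exponent vector of mono k (shift e0 e) is that of the catalecticant entry of e
   translated by (beta_0 - (S - |e0|), beta_{>0} - e0); it equals beta iff e = e0. *)
Let shift (e0 e : exponents) : 'I_m.+1 -> nat :=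
  ord_cons (beta ord0 + deg e0 - deg e)%N (fun i : 'I_m => tail i - e0 i + e i)%N.

Lemma card_exponents : #|{: exponents}| = (\prod_i (tail i).+1)%N.
Proof.
rewrite card_dep_ffun foldrE big_map big_enum.
by apply: eq_bigr => i _; rewrite card_ord.
Qed.

Lemma exponents_le (e : exponents) i : (e i <= tail i)%N.
Proof. by rewrite -ltnS. Qed.

Lemma deg_le (e : exponents) : (deg e <= S)%N.
Proof. by apply: leq_sum => i _; exact: exponents_le. Qed.

Lemma sum_shift e0 e : (deg e <= deg e0)%N -> (\sum_j shift e0 e j = \sum_j beta j)%N.
Proof.
move=> le_e; rewrite /shift !big_ord_recl ord_cons0.
under eq_bigr do rewrite ord_cons_lift.
rewrite big_split /= sumnB => [|i _]; last exact: exponents_le.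
rewrite -/S -/(deg e0) -/(deg e); have := deg_le e0; lia.
Qed.

Lemma shift_self e0 j : shift e0 e0 j = beta j.
Proof.
rewrite /shift; case: (unliftP ord0 j) => [i|] ->; last by rewrite ord_cons0 addnK.
by rewrite ord_cons_lift subnK ?exponents_le.
Qed.

Lemma shift_neq e0 e : e != e0 -> exists j, shift e0 e j != beta j.
Proof.
move=> ne; have [i ne_i] : exists i, e i != e0 i.
  apply/existsP; apply: contraNT ne => /existsPn eq_e.
  by apply/eqP/ffunP => i; apply/eqP; rewrite -[_ == _]negbK eq_e.
exists (lift ord0 i); rewrite /shift ord_cons_lift; apply: contra ne_i => /eqP.
by rewrite -(inj_eq val_inj) /=; have := exponents_le e0 i; rewrite -/(tail i); lia.
Qed.

Lemma mono_shiftE k e0 e : (deg e <= deg e0)%N ->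
  p k ord0 ^+ (S - deg e0) * mono k (shift e0 e) =
  p k ord0 ^+ beta ord0 * (\prod_i p k (lift ord0 i) ^+ (tail i - e0 i)) * catalecticant e k.
Proof.
move=> le_e; rewrite /mono /catalecticant /shift big_ord_recl ord_cons0.
rewrite [X in _ * (_ * X) = _](eq_bigr (fun i =>
  p k (lift ord0 i) ^+ (tail i - e0 i) * p k (lift ord0 i) ^+ e i)) => [|i _]; last first.
  by rewrite ord_cons_lift exprD.
rewrite big_split /= mulrA -exprD.
have -> : (S - deg e0 + (beta ord0 + deg e0 - deg e) = beta ord0 + (S - deg e))%N.
  by have := deg_le e0; lia.
by rewrite exprD; ring.
Qed.

Hypothesis beta0_gt0 : (0 < beta ord0)%N.

Lemma shift_relation (c : exponents -> R) e0 :
  (forall k, \sum_e c e * catalecticant e k = 0) ->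
  (forall e, c e != 0 -> (deg e <= deg e0)%N) ->
  forall k, \sum_e c e * mono k (shift e0 e) = 0.
Proof.
move=> rel e0_max k; have [p0|p0_nz] := eqVneq (p k ord0) 0.
  apply: big1 => e _; have [->|ce] := eqVneq (c e) 0; first by rewrite mul0r.
  rewrite /mono /shift big_ord_recl ord_cons0 p0 expr0n.
  have -> : (beta ord0 + deg e0 - deg e == 0)%N = false by have := e0_max e ce; lia.
  by rewrite mul0r mulr0.
apply: (mulfI (expf_neq0 (S - deg e0) p0_nz)); rewrite mulr0 mulr_sumr.
rewrite -[RHS](mulr0 (p k ord0 ^+ beta ord0 * \prod_i p k (lift ord0 i) ^+ (tail i - e0 i))).
rewrite -[in RHS](rel k) [RHS]mulr_sumr; apply: eq_bigr => e _.
have [->|ce] := eqVneq (c e) 0; first by rewrite !(mul0r, mulr0).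
by rewrite mulrCA mono_shiftE ?e0_max // mulrCA.
Qed.

Hypothesis moment_off : forall g : 'I_m.+1 -> nat,
  (\sum_j g j = \sum_j beta j)%N -> (exists j, g j != beta j) ->
  \sum_k lam k * mono k g = 0.
Hypothesis moment_beta : \sum_k lam k * mono k beta != 0.

Lemma power_sum_length_ge_of_moments : (\prod_i (beta (lift ord0 i)).+1 <= K)%N.
Proof.
rewrite -card_exponents leqNgt; apply/negP.
move=> /(exists_linear_relation catalecticant) [c [e1 c_e1] rel].
case: (@arg_maxnP _ e1 (fun e => c e != 0) deg c_e1) => e0 c_e0 e0_max.
have : \sum_e c e * \sum_k lam k * mono k (shift e0 e) = 0.
  under eq_bigr do rewrite mulr_sumr.
  rewrite exchange_big big1 // => k _.
  under eq_bigr do rewrite mulrCA.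
  by rewrite -mulr_sumr (shift_relation rel e0_max) mulr0.
rewrite (bigD1 e0) //= [X in _ + X]big1 ?addr0 => [|e ne].
  rewrite (eq_bigr (fun k => lam k * mono k beta)) => [|k _]; last first.
    by congr (_ * _); apply: eq_bigr => j _; rewrite shift_self.
  by move/eqP; rewrite mulf_eq0 (negbTE c_e0) (negbTE moment_beta).
have [->|ce] := eqVneq (c e) 0; first by rewrite mul0r.
by rewrite moment_off ?mulr0 //; [exact: sum_shift (e0_max _ ce) | exact: shift_neq].
Qed.

End PowerSumLowerBound.

Lemma power_sum_length_ge (R : numFieldType) m K (lam : 'I_K -> R)
    (p : 'I_K -> 'I_m.+1 -> R) (beta : 'I_m.+1 -> nat) :
  (0 < beta ord0)%N ->
  (forall x : 'I_m.+1 -> R, (forall j, x j != 0) ->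
     \sum_k lam k * (\sum_j p k j * x j) ^+ (\sum_j beta j) = \prod_j x j ^+ beta j) ->
  (\prod_(i < m) (beta (lift ord0 i)).+1 <= K)%N.
Proof.
move=> beta0_gt0 /moments_of_power_identity moments.
apply: (power_sum_length_ge_of_moments (lam := lam) (p := p)) => // [g sum_g [j g_j]|].
  have := moments g sum_g; rewrite [RHS](bigD1 j) //= eq_sym (negbTE g_j) mul0r => /eqP.
  by rewrite mulf_eq0 pnatr_eq0 eqn0Ngt words_gt0 //= => /eqP.
have := moments beta erefl; rewrite [RHS]big1 => [|j _]; last by rewrite eqxx.
move=> moment_beta; apply/eqP => moment0.
by move: moment_beta; rewrite moment0 mulr0 => /eqP; rewrite eq_sym oner_eq0.
Qed.

(** * Upper bound: a half box of linear forms *)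

Section Involution.
Variables (I : finType) (A : {pred I}) (sigma : I -> I).
Hypothesis sigma_in : forall i, sigma i \in A.
Hypothesis sigmaK : {in A, involutive sigma}.

Definition pair_reps := [pred i | (i \in A) && (enum_rank i < enum_rank (sigma i))%N].

Lemma big_in_involution (R : Type) (idx : R) (op : Monoid.com_law idx) (F : I -> R) :
  \big[op/idx]_(i in A) F (sigma i) = \big[op/idx]_(i in A) F i.
Proof.
rewrite [RHS](reindex_onto sigma sigma) => [|i /sigmaK //].
apply: eq_bigl => i; rewrite sigma_in /=.
apply/idP/eqP => [/sigmaK //|<-]; exact: sigma_in.
Qed.

Lemma card_pair_reps : (#|pair_reps| <= #|A|./2)%N.
Proof.
have card_reps : #|pair_reps| = (\sum_(i in A) (enum_rank i < enum_rank (sigma i)))%N.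
  rewrite -[#|pair_reps|]sum1_card.
  rewrite (eq_bigl (fun i => (i \in A) && (enum_rank i < enum_rank (sigma i))%N)) //.
  by rewrite big_mkcondr; apply: eq_bigr => i _; case: ifP.
rewrite geq_half_double -addnn {1}card_reps.
rewrite -(big_in_involution _ (fun i => nat_of_bool (enum_rank i < enum_rank (sigma i))%N)).
rewrite card_reps -big_split /= -[#|A|]sum1_card; apply: leq_sum => i iA; rewrite (sigmaK iA).
by have [] := ltngtP (enum_rank i) (enum_rank (sigma i)).
Qed.

Lemma sum_pair_reps (V : nmodType) (F : I -> V) :
  {in A, forall i, sigma i = i -> F i = 0} ->
  \sum_(i in A) F i = \sum_(i in pair_reps) (F i + F (sigma i)).
Proof.
move=> F_fix; set lt := fun i => (enum_rank i < enum_rank (sigma i))%N.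
rewrite [RHS](eq_bigl (fun i => (i \in A) && lt i)) // [RHS]big_mkcondr [RHS](eq_bigr (fun i =>
  (if lt i then F i else 0) + (if lt i then F (sigma i) else 0))) => [|i _]; last first.
  by case: ifP; rewrite ?addr0.
rewrite big_split /= -(big_in_involution _ (fun i => if lt i then F (sigma i) else 0)).
rewrite -big_split /=; apply: eq_bigr => i iA; rewrite /lt (sigmaK iA).
have [_|_|/val_inj/enum_rank_inj fix_i] := ltngtP (enum_rank i) (enum_rank (sigma i)).
- by rewrite addr0.
- by rewrite add0r.
- by rewrite addr0 F_fix.
Qed.
End Involution.

Section MonomialGrid.
Variables (R : numFieldType) (M : nat) (beta : 'I_M -> nat).
Let D := (\sum_j beta j)%N.
Implicit Type X : {ffun 'I_M -> 'I_D.+1}.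

Let beta_lt j : (beta j < D.+1)%N.
Proof. by rewrite ltnS leq_sum_ord. Qed.

(* Nodes symmetric about 0, so that antipodal points of the box give opposite forms. *)
Definition node j (l : 'I_D.+1) : R := 2 * l%:R - (beta j)%:R.

Definition box := [pred X : {ffun 'I_M -> 'I_D.+1} | [forall j, (X j <= beta j)%N]].

Definition antipode X : {ffun 'I_M -> 'I_D.+1} := [ffun j => inord (beta j - X j)].

Lemma antipode_val X j : (antipode X j : nat) = (beta j - X j)%N.
Proof. by rewrite ffunE inordK // (leq_ltn_trans (leq_subr _ _) (beta_lt j)). Qed.

Lemma antipode_in X : antipode X \in box.
Proof. by apply/forallP => j; exact: leq_trans (eq_leq (antipode_val X j)) (leq_subr _ _). Qed.

Lemma antipodeK : {in box, involutive antipode}.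
Proof.
by move=> X /forallP X_le; apply/ffunP => j; apply: ord_inj; rewrite !antipode_val subKn.
Qed.

Lemma node_antipode X j : X \in box -> node j (antipode X j) = - node j (X j).
Proof. by move=> /forallP X_le; rewrite /node antipode_val natrB //; ring. Qed.

Lemma card_box : #|box| = (\prod_j (beta j).+1)%N.
Proof.
rewrite (eq_card (B := family (fun j => [pred l : 'I_D.+1 | (l < (beta j).+1)%N]))).
  rewrite card_family foldrE big_map big_enum /=.
  by apply: eq_bigr => j _; rewrite card_ord_ltn.
by move=> X; rewrite [X \in box]inE.
Qed.

Lemma box_power_sum : exists c : {ffun 'I_M -> 'I_D.+1} -> R,
  forall x, \sum_(X in box) c X * (\sum_j node j (X j) * x j) ^+ D = \prod_j x j ^+ beta j.
Proof.
have node_inj j : {in [pred l : 'I_D.+1 | (l <= beta j)%N] &, injective (node j)}.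
  move=> l1 l2 _ _ /addIr /(mulfI _) /=; rewrite pnatr_eq0 => /(_ isT) /eqP.
  by rewrite eqr_nat => /eqP /val_inj.
pose wP j := dual_weights (beta_lt j) (leqnn (beta j)) (node_inj j).
pose v j := s2val (wP j).
have v_out j (l : 'I_D.+1) : (beta j < l)%N -> v j l = 0 := s2valP (wP j) l.
have v_node j e : (e <= beta j)%N -> \sum_l v j l * node j l ^+ e = (e == beta j)%:R.
  exact: (s2valP' (wP j)).
pose wd : R := (words D beta)%:R.
have wd_neq0 : wd != 0 by rewrite pnatr_eq0 -lt0n words_gt0.
exists (fun X => grid_weight v X / wd) => x; apply: (mulfI wd_neq0).
rewrite -(grid_power_sum_monomial (erefl D) v_node) mulr_sumr.
rewrite [RHS](bigID (mem box)) /= [X in _ = _ + X]big1 ?addr0 => [|X X_out].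
  by apply: eq_bigr => X _; rewrite mulrA [wd * _]mulrC divfK.
have [j lt_j] : exists j, (beta j < X j)%N.
  by move: X_out; rewrite inE negb_forall => /existsP [j]; rewrite -ltnNge; exists j.
by rewrite /grid_weight (bigD1 j) //= v_out // !mul0r.
Qed.

End MonomialGrid.

Lemma monomial_as_power_sum (R : numFieldType) M (beta : 'I_M -> nat) :
  ~~ odd (\sum_j beta j) -> (0 < \sum_j beta j)%N ->
  exists J (mu : 'I_J -> R) (q : 'I_J -> 'I_M -> R),
    (J <= (\prod_j (beta j).+1)./2)%N /\
    forall x, \sum_i mu i * (\sum_j q i j * x j) ^+ (\sum_j beta j) = \prod_j x j ^+ beta j.
Proof.
move=> even_D D_gt0; have [c box_id] := box_power_sum R beta.
have pair_in := @antipode_in _ beta; have pairK := @antipodeK _ beta.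
pose P := pair_reps (box beta) (@antipode _ beta).
exists #|P|, (fun r : 'I_#|P| => c (enum_val r) + c (antipode (enum_val r))).
exists (fun (r : 'I_#|P|) j => node R j (enum_val r j)); split.
  by rewrite (leq_trans (card_pair_reps pair_in pairK)) // half_leq // card_box.
move=> x; rewrite -box_id (sum_pair_reps pair_in pairK) => [|X X_in fix_X].
  rewrite [RHS]big_enum_val /=; apply: eq_bigr => r _; set X := enum_val r.
  have X_in : X \in box beta by have := enum_valP r; rewrite inE => /andP [].
  have -> : \sum_j node R j (antipode X j) * x j = - \sum_j node R j (X j) * x j.
    by rewrite -sumrN; apply: eq_bigr => j _; rewrite node_antipode // mulNr.
  by rewrite exprNn -signr_odd (negbTE even_D) mul1r mulrDl.
have node0 j : node R j (X j) = 0.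
  have /eqP : node R j (X j) = - node R j (X j).
    by rewrite -{1}fix_X node_antipode.
  by rewrite -addr_eq0 -mulr2n mulrn_eq0 /= => /eqP.
by rewrite big1 ?expr0n ?gtn_eqF ?mulr0 // => j _; rewrite node0 mul0r.
Qed.

(** * DC decompositions with atoms *)

Section AtomDecompositions.
Variables (R : realType) (n s : nat) (f : ('I_n -> R) -> R).

Lemma DC_atoms_of_signed_sum J (mu : 'I_J -> R) (U : 'I_J -> 'I_n -> R) (ka : 'I_J -> R) :
  (forall th, f th = \sum_i mu i * atom s (U i) (ka i) th) ->
  exists2 k, (k <= J)%N & DC_atoms s f k.
Proof.
move=> fE; pose pos := [pred i | 0 < mu i]; pose neg := [pred i | mu i < 0].
exists (#|pos| + #|neg|)%N.
  have disj : #|[predI pos & neg]| = 0%N.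
    apply: eq_card0 => i; rewrite !inE; apply/andP => -[mu_gt0 mu_lt0].
    by have := lt_trans mu_gt0 mu_lt0; rewrite ltxx.
  by rewrite -cardUI disj addn0 -[X in (_ <= X)%N]card_ord max_card.
exists #|pos|, #|neg|.
exists (fun r : 'I_#|pos| => mu (enum_val r)), (fun r => U (enum_val r)).
exists (fun r => ka (enum_val r)), (fun r : 'I_#|neg| => - mu (enum_val r)).
exists (fun r => U (enum_val r)), (fun r => ka (enum_val r)).
split => // [r|r|th]; first exact: (enum_valP r).
  by rewrite oppr_gt0; exact: (enum_valP r).
rewrite fE; under [X in _ - X]eq_bigr do rewrite mulNr.
rewrite sumrN opprK -!(big_enum_val (fun i => mu i * atom s (U i) (ka i) th)) /=.
rewrite (bigID pos) /=; congr (_ + _).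
rewrite [LHS]big_mkcond [RHS]big_mkcond; apply: eq_bigr => i _; rewrite !inE.
have [mu_lt0|mu_gt0|mu0] := ltrgtP (mu i) 0 => //.
by rewrite mu0 mul0r.
Qed.

Lemma signed_sum_of_DC_atoms k : DC_atoms s f k ->
  exists (lam : 'I_k -> R) (U : 'I_k -> 'I_n -> R) (ka : 'I_k -> R),
    forall th, f th = \sum_i lam i * atom s (U i) (ka i) th.
Proof.
case=> [r [q [a [ug [kg [c [uh [kh [<- _ _ fE]]]]]]]]].
exists (fun i => match split i with inl i' => a i' | inr i' => - c i' end).
exists (fun i => match split i with inl i' => ug i' | inr i' => uh i' end).
exists (fun i => match split i with inl i' => kg i' | inr i' => kh i' end).
move=> th; rewrite fE big_split_ord /= -sumrN.
congr (_ + _); apply: eq_bigr => i _.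
  by have /= -> := unsplitK (inl i : 'I_r + 'I_q).
by have /= -> := unsplitK (inr i : 'I_r + 'I_q); rewrite mulNr.
Qed.

Lemma exists_min_atom_count k : DC_atoms s f k -> exists N, min_atom_count s f N.
Proof.
move=> DCk; have [|N [[DCN N_min] _]] :=
  @dec_inh_nat_subset_has_unique_least_element (DC_atoms s f) _ (ex_intro _ k DCk).
  by move=> N; exact: classic.
by exists N; split=> // k' /N_min /ssrnat.leP.
Qed.

End AtomDecompositions.

Lemma min_atom_count_even (R : realType) n (b : 'I_n.+1 -> nat) :
  (0 < b ord0)%N ->
  let s := (\sum_(i < n.+1) b i)%N in
  let f := fun th : 'I_n.+1 -> R => \prod_(i < n.+1) th i ^+ b i in
  ~~ odd s ->
  exists N : nat, min_atom_count s f N /\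
    (\prod_(i < n.+1 | (0 < i)%N) (b i).+1 <= N)%N /\
    (N <= (\prod_(i < n.+1) (b i).+1)./2)%N.
Proof.
move=> b0_gt0 s f even_s.
have s_gt0 : (0 < s)%N := leq_trans b0_gt0 (leq_sum_ord b ord0).
have [J [mu [q [J_le fE]]]] := monomial_as_power_sum R even_s s_gt0.
have [k k_le DCk] : exists2 k, (k <= J)%N & DC_atoms s f k.
  apply: (DC_atoms_of_signed_sum (mu := mu) (U := q) (ka := fun=> 0)) => th.
  by rewrite /f -fE; apply: eq_bigr => i _; rewrite /atom even_s.
have [N [DCN N_min]] := exists_min_atom_count DCk.
exists N; split=> //; split; last exact: leq_trans (N_min _ DCk) (leq_trans k_le J_le).
have [lam [U [ka fE']]] := signed_sum_of_DC_atoms DCN.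
rewrite big_mkcond big_ord_recl /= mul1n.
apply: (power_sum_length_ge (lam := lam) (p := U) b0_gt0) => x _.
by rewrite -/s -/(f x) fE'; apply: eq_bigr => i _; rewrite /atom even_s.
Qed.

Section OddDegree.
Variables (R : realType) (n : nat) (b : 'I_n -> nat).
Let s := (\sum_i b i)%N.
Let f := fun th : 'I_n -> R => \prod_i th i ^+ b i.
(* Exponents of the monomial homogenized by an extra variable at index 0. *)
Let hb := ord_cons 1%N b.
Hypothesis odd_s : odd s.

Let sum_hb : (\sum_j hb j)%N = s.+1.
Proof. by rewrite /hb big_ord_recl ord_cons0; under eq_bigr do rewrite ord_cons_lift. Qed.

Lemma DC_atoms_odd_ge k : DC_atoms s f k -> (\prod_i (b i).+1 <= k)%N.
Proof.
case/signed_sum_of_DC_atoms => lam [U [ka fE]].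
rewrite (eq_bigr (fun i => (hb (lift ord0 i)).+1)) => [|i _]; last by rewrite /hb ord_cons_lift.
apply: (power_sum_length_ge (lam := lam) (p := fun k => ord_cons (ka k) (U k))) => [|x x_neq0].
  by rewrite /hb ord_cons0.
set t := x ord0; have t_neq0 : t != 0 := x_neq0 ord0.
pose th j := x (lift ord0 j) / t.
have hom i : \sum_j ord_cons (ka i) (U i) j * x j = t * (dotp (U i) th + ka i).
  rewrite big_ord_recl ord_cons0 mulrDr addrC [ka i * _]mulrC /dotp mulr_sumr.
  by congr (_ + _); apply: eq_bigr => j _; rewrite ord_cons_lift /th; field.
transitivity (t ^+ s.+1 * f th).
  rewrite fE mulr_sumr sum_hb; apply: eq_bigr => i _.
  by rewrite hom exprMn /atom odd_s /= mulrCA.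
rewrite /f /th /hb big_ord_recl ord_cons0 -/t.
under [X in _ = _ * X]eq_bigr do rewrite ord_cons_lift.
under [X in _ * X = _]eq_bigr do rewrite exprMn.
rewrite big_split /= prodrXr -/s exprVn exprS expr1.
by field; exact: expf_neq0.
Qed.

Lemma DC_atoms_odd_le : exists2 k, (k <= \prod_i (b i).+1)%N & DC_atoms s f k.
Proof.
have prod_hb : (\prod_j (hb j).+1)%N = (\prod_i (b i).+1).*2.
  rewrite /hb big_ord_recl ord_cons0 mul2n; congr (_.*2).
  by apply: eq_bigr => i _; rewrite ord_cons_lift.
have even_hb : ~~ odd (\sum_j hb j) by rewrite sum_hb /= odd_s.
have hb_gt0 : (0 < \sum_j hb j)%N by rewrite sum_hb.
have [J [mu [q [J_le fE]]]] := monomial_as_power_sum R even_hb hb_gt0.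
rewrite prod_hb doubleK in J_le.
have [k k_le DCk] : exists2 k, (k <= J)%N & DC_atoms s f k.
  apply: (DC_atoms_of_signed_sum (mu := mu) (U := fun i j => q i (lift ord0 j))
                                  (ka := fun i => q i ord0)) => th.
  have := fE (ord_cons 1 th); rewrite sum_hb [RHS]big_ord_recl ord_cons0 expr1n mul1r.
  under [X in _ = X -> _]eq_bigr do rewrite /hb !ord_cons_lift.
  rewrite /f => <-; apply: eq_bigr => i _; rewrite /atom odd_s /= big_ord_recl ord_cons0.
  rewrite mulr1 addrC; congr (_ * (_ + _) ^+ _).
  by apply: eq_bigr => j _; rewrite ord_cons_lift.
by exists k; first exact: leq_trans k_le J_le.
Qed.

End OddDegree.

Lemma min_atom_count_odd (R : realType) n (b : 'I_n -> nat) :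
  let s := (\sum_(i < n) b i)%N in
  let f := fun th : 'I_n -> R => \prod_(i < n) th i ^+ b i in
  odd s -> min_atom_count s f (\prod_(i < n) (b i).+1)%N.
Proof.
move=> s f odd_s; have [k k_le DCk] := DC_atoms_odd_le R odd_s.
have kE : k = (\prod_i (b i).+1)%N.
  by apply/eqP; rewrite eqn_leq k_le (DC_atoms_odd_ge odd_s DCk).
by split=> [|k' /(DC_atoms_odd_ge odd_s)]; rewrite -?kE.
Qed.

Theorem theorem3p2 (R : realType) (n : nat) (b : 'I_n -> nat) :
  (1 <= n)%N ->
  (forall i, 1 <= b i)%N ->
  (forall i j : 'I_n, (i <= j)%N -> (b i <= b j)%N) ->
  let s := (\sum_(i < n) b i)%N in
  let f := fun th : 'I_n -> R => \prod_(i < n) th i ^+ b i in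
  (~~ odd s ->
     exists N : nat, min_atom_count s f N /\
       (\prod_(i < n | (0 < i)%N) (b i).+1 <= N)%N /\
       (N <= (\prod_(i < n) (b i).+1)./2)%N) /\
  (odd s -> min_atom_count s f (\prod_(i < n) (b i).+1)%N).
Proof.
case: n b => [//|n] b _ b_gt0 _ s f; split.
- exact: min_atom_count_even (b_gt0 ord0).
- exact: min_atom_count_odd.
Qed.
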